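(* Let $\gamma > 1$ satisfy $\gamma(\gamma - 1)^2 > 1$, and let $I$ be a $\gamma$-stable instance of the metric Steiner tree problem with optimal Steiner tree $\mathrm{OPT}$. Let $H$ be a subgraph of $\mathrm{OPT}$ with at least two vertices, let $ab$ be an edge of $H$, and let $c \in V(\mathrm{OPT}) \setminus V(H)$. Then $w_{ca} < \frac{1}{\gamma - 1} w_{ab}$ if and only if $ca$ is an edge of $\mathrm{OPT}$.
   Context: An instance of the metric Steiner tree problem consists of a finite set $V$ of points of a metric space with metric $d$, a set $T \subseteq V$ of terminals, and the complete graph on $V$ with edge weights $w_{uv} = d(u,v)$. Points of $V \setminus T$ are Steiner points. A Steiner tree is a tree in this complete graph whose vertex set contains all of $T$; its weight is the sum of its edge weights. For $\gamma > 1$, the instance is $\gamma$-stable if it has a minimum-weight Steiner tree $\mathrm{OPT}$ such that for every $w' : V \times V \to \mathbb{R}_{\ge 0}$ with $w_{uv} \le w'_{uv} \le \gamma w_{uv}$ for all $u,v$, every minimum-weight Steiner tree with respect to $w'$ equals $\mathrm{OPT}$. $V(\mathrm{OPT})$ and $V(H)$ denote vertex sets. *)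

From HB Require Import structures.
From mathcomp Require Import all_boot all_order all_algebra.
Set Implicit Arguments. Unset Strict Implicit. Unset Printing Implicit Defensive.
Import Order.TTheory GRing.Theory Num.Theory.
Local Open Scope ring_scope.

Section Steiner.
Variables (R : realFieldType) (V : finType).

Definition is_metric (d : V -> V -> R) : Prop :=
  [/\ forall x y, 0 <= d x y,
      forall x y, d x y = 0 <-> x = y,
      forall x y, d x y = d y x &
      forall x y z, d x z <= d x y + d y z].

(* A graph in the complete graph on V: a vertex set and a set of edges,
   each edge being a 2-element subset {u,v} (u <> v). *)
Definition graph := ({set V} * {set {set V}})%type.

Definition gverts (G : graph) : {set V} := G.1.
Definition gedges (G : graph) : {set {set V}} := G.2.

Definition is_graph (G : graph) : Prop :=
  forall e, e \in gedges G ->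
    exists u v, [/\ u != v, e = [set u; v], u \in gverts G & v \in gverts G].

Definition gadj (G : graph) : rel V := fun x y => [set x; y] \in gedges G.

Definition is_tree (G : graph) : Prop :=
  [/\ is_graph G, gverts G != set0,
      (forall x y, x \in gverts G -> y \in gverts G -> connect (gadj G) x y) &
      #|gedges G| = (#|gverts G|).-1]%N.

Definition is_steiner_tree (T : {set V}) (G : graph) : Prop :=
  is_tree G /\ T \subset gverts G.

(* Weight of the edge {u,v} under w : V -> V -> R (average of the two
   orientations, which is w u v for symmetric w). *)
Definition edge_weight (w : V -> V -> R) (e : {set V}) : R :=
  (\sum_(u in e) \sum_(v in e | u != v) w u v) / 2%:R.

Definition weight (w : V -> V -> R) (G : graph) : R :=
  \sum_(e in gedges G) edge_weight w e.

Definition is_min_steiner_tree (w : V -> V -> R) (T : {set V}) (G : graph) : Prop :=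
  is_steiner_tree T G /\
  forall G', is_steiner_tree T G' -> weight w G <= weight w G'.

Definition stable_with (gamma : R) (d : V -> V -> R) (T : {set V}) (OPT : graph) : Prop :=
  is_min_steiner_tree d T OPT /\
  forall w' : V -> V -> R,
    (forall u v, d u v <= w' u v <= gamma * d u v) ->
    forall G, is_min_steiner_tree w' T G -> G = OPT.

Definition is_subgraph (H G : graph) : Prop :=
  [/\ is_graph H, gverts H \subset gverts G & gedges H \subset gedges G].

End Steiner.

(* Stability lets us raise the weight of a single edge pq of OPT by the factor
   gamma without changing the optimum.  Hence exchanging pq for a non-edge uv
   that reconnects the two components of OPT - pq must cost more:
   gamma d(p,q) < d(u,v).
   If ca is an edge, exchanging it for cb gives
   gamma d(c,a) < d(c,b) <= d(c,a) + d(a,b).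
   If ca is not an edge, let xa be the last edge of the tree path from c to a.
   Exchanging xa for ca gives gamma d(x,a) < d(c,a), and, when x <> b,
   exchanging ab for xb gives (gamma - 1) d(a,b) < d(x,a); combined with
   (gamma - 1) d(c,a) < d(a,b) this forces gamma (gamma - 1)^2 < 1. *)

From HB Require Import structures.
From mathcomp Require Import all_boot all_order all_algebra.
From mathcomp Require Import lra.
From mathcomp Require Import boolp.
Import Order.TTheory GRing.Theory Num.Theory.
Local Open Scope ring_scope.
Set Implicit Arguments. Unset Strict Implicit. Unset Printing Implicit Defensive.

Section TreeFacts.
Variable V : finType.
Implicit Types (E : {set {set V}}) (G : graph V).

Definition eadj E : rel V := fun x y => [set x; y] \in E.

Lemma eadj_sym E : symmetric (eadj E).
Proof. by move=> x y; rewrite /eadj setUC. Qed.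

Lemma connect_eadjC E x y : connect (eadj E) x y = connect (eadj E) y x.
Proof. exact: (sym_connect_sym (eadj_sym E)). Qed.

Lemma set2_inj (x y p q : V) :
  [set x; y] = [set p; q] -> (x = p /\ y = q) \/ (x = q /\ y = p).
Proof.
move=> exy.
have xpq : x \in [set p; q] by rewrite -exy set21.
have ypq : y \in [set p; q] by rewrite -exy set22.
have pxy : p \in [set x; y] by rewrite exy set21.
have qxy : q \in [set x; y] by rewrite exy set22.
by case/set2P: xpq ypq pxy qxy => ? /set2P[] ? /set2P[] ? /set2P[] ?; subst; auto.
Qed.

Lemma graph_edge G x y : is_graph G -> [set x; y] \in gedges G ->
  [/\ x != y, x \in gverts G & y \in gverts G].
Proof.
move=> gG /gG[u [v [nuv /set2_inj[] [-> ->] uG vG]]]; first by split.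
by split; rewrite // eq_sym.
Qed.

Lemma connect_eadjS E E' : E \subset E' ->
  subrel (connect (eadj E)) (connect (eadj E')).
Proof. by move=> sEE'; apply: connect_sub => x y exy; apply/connect1/(subsetP sEE'). Qed.

Lemma connect_avoiding_edge E E' p q :
  E :\ [set p; q] \subset E' -> connect (eadj E') p q ->
  subrel (connect (eadj E)) (connect (eadj E')).
Proof.
move=> sEE' cpq; apply: connect_sub => x y exy.
have [/set2_inj[] [-> ->] | ne] := eqVneq [set x; y] [set p; q].
- exact: cpq.
- by rewrite connect_eadjC.
- by apply/connect1/(subsetP sEE'); rewrite in_setD1 ne.
Qed.

Section Depth.
Variables (E : {set {set V}}) (r : V).

Definition ball k := iter k (fun S => S :|: [set y | [exists x in S, eadj E x y]]) [set r].

Lemma ball_connect w : connect (eadj E) w r -> exists k, w \in ball k.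
Proof.
case/connectP => s; elim: s w => [|y s IHs] w /=.
  by move=> _ <-; exists 0%N; rewrite set11.
case/andP => ewy /IHs /[apply] -[k yk]; exists k.+1.
by rewrite /ball iterS !inE; apply/orP; right; apply/existsP; exists y; rewrite yk eadj_sym.
Qed.

Lemma ex_depth w : exists k, (w \in ball k) || ~~ connect (eadj E) w r.
Proof.
have [/ball_connect[k wk] | nc] := boolP (connect (eadj E) w r).
  by exists k; rewrite wk.
by exists 0%N; apply/orP; right.
Qed.

(* Vertices not connected to [r] get the junk depth [0]. *)
Definition depth w := ex_minn (ex_depth w).

Lemma depth_min w k : w \in ball k -> (depth w <= k)%N.
Proof. by move=> wk; rewrite /depth; case: ex_minnP => m _; apply; rewrite wk. Qed.

Lemma depth_ball w : connect (eadj E) w r -> w \in ball (depth w).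
Proof. by move=> cw; rewrite /depth; case: ex_minnP => m; rewrite cw orbF. Qed.

Lemma depth_parent w : connect (eadj E) w r -> w != r ->
  exists x, eadj E x w && (depth x < depth w)%N.
Proof.
move=> cw nwr; have := depth_ball cw; have := @depth_min w.
case: (depth w) => [|k] wmin; first by rewrite inE (negbTE nwr).
rewrite /ball iterS -/(ball k) inE => /orP[/wmin|]; first by rewrite ltnn.
rewrite inE => /existsP[x /andP[xk exw]]; exists x.
by rewrite exw ltnS depth_min.
Qed.

(* Sending each vertex other than [r] to the edge joining it to a parent of
   smaller depth is injective. *)
Lemma connected_card_le (W : {set V}) :
  r \in W -> {in W, forall x, connect (eadj E) x r} -> (#|W|.-1 <= #|E|)%N.
Proof.
move=> rW cW.
pose parent w := odflt w [pick x | eadj E x w && (depth x < depth w)%N].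
have parentP w : w \in W :\ r -> eadj E (parent w) w && (depth (parent w) < depth w)%N.
  rewrite in_setD1 => /andP[nwr wW]; rewrite /parent; case: pickP => [x -> //|none].
  by have [x] := depth_parent (cW _ wW) nwr; rewrite none.
have inj : {in W :\ r &, injective (fun w => [set w; parent w])}.
  move=> w1 w2 w1W w2W /set2_inj[[] //|[e1 e2]].
  have /andP[_] := parentP _ w1W; have /andP[_] := parentP _ w2W.
  by rewrite -e1 e2 => /ltn_trans/[apply]; rewrite ltnn.
have sub : [set [set w; parent w] | w in W :\ r] \subset E.
  apply/subsetP => _ /imsetP[w /parentP/andP[ew _] ->].
  by rewrite -[_ \in _]/(eadj E w (parent w)) eadj_sym.
by rewrite (cardsD1 r W) rW -(card_in_imset inj) subset_leq_card.
Qed.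

End Depth.

Lemma tree_bridge G p q : is_tree G -> [set p; q] \in gedges G ->
  ~~ connect (eadj (gedges G :\ [set p; q])) p q.
Proof.
case=> gG _ cG cardG pqG; apply/negP => cpq.
have [_ pG _] := graph_edge gG pqG.
have cW x : x \in gverts G -> connect (eadj (gedges G :\ [set p; q])) x p.
  by move=> xG; apply: connect_avoiding_edge cpq _ _ (cG x p xG pG).
have := connected_card_le pG cW.
by rewrite -cardG (cardsD1 [set p; q] (gedges G)) pqG ltnn.
Qed.

Lemma tree_triangle_free G x y z : is_tree G ->
  [set x; y] \in gedges G -> [set y; z] \in gedges G -> x != z ->
  [set x; z] \notin gedges G.
Proof.
move=> treeG xyG yzG nxz; apply/negP => xzG.
have [gG _ _ _] := treeG.
have [nxy _ _] := graph_edge gG xyG; have [nyz _ _] := graph_edge gG yzG.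
have xy_xz : [set x; y] != [set x; z].
  by apply/eqP => /set2_inj[[_ eyz]|[exz _]]; [move: nyz | move: nxz]; rewrite ?eyz ?exz eqxx.
have yz_xz : [set y; z] != [set x; z].
  by apply/eqP => /set2_inj[[eyx _]|[eyz _]]; [move: nxy | move: nyz]; rewrite ?eyx ?eyz eqxx.
apply: (negP (tree_bridge treeG xzG)).
by apply: (connect_trans (y := y)); apply/connect1; rewrite /eadj in_setD1 ?xy_xz ?yz_xz.
Qed.

Lemma connect_last_edge E c a : c != a -> connect (eadj E) c a ->
  exists x, [/\ x != a, [set x; a] \in E & connect (eadj (E :\ [set x; a])) c x].
Proof.
move=> + /connectP[s0 ps0 la]; subst a; case/shortenP: ps0 => s ps us _.
case/lastP: s ps us => [|s a]; first by rewrite eqxx.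
rewrite last_rcons rcons_path -rcons_cons rcons_uniq => /andP[ps sa] /andP[aNs _] _.
exists (last c s); split => //.
  by apply: contraNneq aNs => <-; apply: mem_last.
apply/connectP; exists s => //.
have s_a : all (predC1 a) (c :: s) by apply/allP => y ys; apply: contraNneq aNs => <-.
apply: sub_in_path s_a ps => y z /[!inE] ya za yz.
rewrite /eadj in_setD1 -[_ \in E]/(eadj E y z) yz andbT.
apply/eqP => eyz; have := set22 (last c s) a.
by rewrite -eyz !inE eq_sym (negbTE ya) eq_sym (negbTE za).
Qed.

Definition swap_edge G (e f : {set V}) : graph V := (gverts G, f |: (gedges G :\ e)).

Lemma tree_swap_edge G p q u v : is_tree G -> [set p; q] \in gedges G ->
  u != v -> u \in gverts G -> v \in gverts G -> [set u; v] \notin gedges G ->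
  connect (eadj (gedges G :\ [set p; q])) u p ->
  connect (eadj (gedges G :\ [set p; q])) v q ->
  is_tree (swap_edge G [set p; q] [set u; v]).
Proof.
case=> gG neG cG cardG pqG nuv uG vG uvNG cup cvq.
have sub : gedges G :\ [set p; q] \subset [set u; v] |: (gedges G :\ [set p; q]).
  exact: subsetUr.
have cpq : connect (eadj ([set u; v] |: (gedges G :\ [set p; q]))) p q.
  apply: (connect_trans (y := u)).
    by rewrite connect_eadjC; apply: connect_eadjS sub _ _ cup.
  apply: (connect_trans (y := v)); first by apply/connect1; rewrite /eadj setU11.
  exact: connect_eadjS sub _ _ cvq.
split => //=.
- move=> e /setU1P[-> | /setD1P[_ /gG//]]; by exists u, v.
- by move=> x y xG yG; apply: connect_avoiding_edge sub cpq _ _ (cG x y xG yG).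
- rewrite cardsU1 in_setD1 (negbTE uvNG) andbF -cardG.
  by rewrite [in RHS](cardsD1 [set p; q] (gedges G)) pqG.
Qed.

End TreeFacts.

Section Weights.
Variables (R : realFieldType) (V : finType).
Implicit Types (w d : V -> V -> R) (G : graph V).

Lemma edge_weight_set2 w x y : x != y ->
  edge_weight w [set x; y] = (w x y + w y x) / 2%:R.
Proof.
move=> nxy; rewrite /edge_weight big_setU1 /= ?inE // big_set1 !big_mkcondr /=.
rewrite !big_setU1 /= ?inE // !big_set1 eqxx (negbTE nxy) eq_sym (negbTE nxy).
by rewrite eqxx /= add0r addr0.
Qed.

Lemma edge_weight_set2_sym w x y : (forall x y, w x y = w y x) -> x != y ->
  edge_weight w [set x; y] = w x y.
Proof. by move=> wC nxy; rewrite edge_weight_set2 // (wC y x); lra. Qed.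

Lemma weight_swap_edge w G e f : e \in gedges G -> f \notin gedges G ->
  weight w (swap_edge G e f) + edge_weight w e = weight w G + edge_weight w f.
Proof.
move=> eG fNG; rewrite /weight /= big_setU1 /=; last by rewrite in_setD1 (negbTE fNG) andbF.
by rewrite [in RHS](big_setD1 _ eG) /=; lra.
Qed.

Definition raise_edge (gamma : R) d (e : {set V}) : V -> V -> R :=
  fun x y => if [set x; y] == e then gamma * d x y else d x y.

Lemma raise_edge_bounds gamma d e : 1 <= gamma -> (forall x y, 0 <= d x y) ->
  forall x y, d x y <= raise_edge gamma d e x y <= gamma * d x y.
Proof. by move=> g1 d0 x y; have := d0 x y; rewrite /raise_edge; case: ifP => _ ?; nra. Qed.

Lemma edge_weight_raise_edge gamma d e x y : (forall x y, d x y = d y x) -> x != y ->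
  edge_weight (raise_edge gamma d e) [set x; y] =
  if [set x; y] == e then gamma * d x y else d x y.
Proof.
move=> dC nxy; apply: edge_weight_set2_sym nxy => {}x {}y.
by rewrite /raise_edge setUC dC.
Qed.

End Weights.

Lemma ex_minimizer (R : realDomainType) (X : finType) (P : X -> Prop) (f : X -> R) x0 :
  P x0 -> exists2 y, P y & forall z, P z -> f y <= f z.
Proof.
move=> Px0; have [y /asboolP Py ymin] :=
  @arg_minP _ _ _ x0 (fun x => `[< P x >]) f (asboolT Px0).
by exists y => // z /asboolP/ymin.
Qed.

Section Stability.
Variables (R : realFieldType) (V : finType) (gamma : R) (d : V -> V -> R).
Variables (T : {set V}) (OPT : graph V).
Hypothesis stable : stable_with gamma d T OPT.

Lemma stable_min_steiner_tree w' : (forall u v, d u v <= w' u v <= gamma * d u v) ->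
  is_min_steiner_tree w' T OPT.
Proof.
move=> w'B; have [[stO _] stab] := stable.
have [G stG minG] := ex_minimizer (weight w') stO.
by rewrite -(stab w' w'B G (conj stG minG)).
Qed.

Lemma stable_eq_opt w' G : (forall u v, d u v <= w' u v <= gamma * d u v) ->
  is_steiner_tree T G -> weight w' G <= weight w' OPT -> G = OPT.
Proof.
move=> w'B stG GO; apply: (stable.2 w' w'B); split => // G'.
by move/(stable_min_steiner_tree w'B).2; apply: le_trans.
Qed.

Hypotheses (gamma_gt1 : 1 < gamma) (metric_d : is_metric d).

Lemma stable_swap_lt p q u v : [set p; q] \in gedges OPT -> p != q ->
  u != v -> u \in gverts OPT -> v \in gverts OPT -> [set u; v] \notin gedges OPT ->
  connect (eadj (gedges OPT :\ [set p; q])) u p ->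
  connect (eadj (gedges OPT :\ [set p; q])) v q ->
  gamma * d p q < d u v.
Proof.
move=> pqO npq nuv uO vO uvNO cup cvq; have [d0 _ dC _] := metric_d.
have [[[treeO TO] _] _] := stable.
rewrite ltNge; apply/negP => duv_le.
pose w' := raise_edge gamma d [set p; q].
have w'B := raise_edge_bounds [set p; q] (ltW gamma_gt1) d0.
have stG' : is_steiner_tree T (swap_edge OPT [set p; q] [set u; v]).
  by split; [apply: tree_swap_edge | exact: TO].
have uv_pq : ([set u; v] == [set p; q]) = false by apply: contraNF uvNO => /eqP->.
have G'O : swap_edge OPT [set p; q] [set u; v] = OPT.
  apply: stable_eq_opt w'B stG' _.
  have := weight_swap_edge w' pqO uvNO.
  by rewrite !edge_weight_raise_edge // eqxx uv_pq; lra.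
have : [set p; q] \in gedges (swap_edge OPT [set p; q] [set u; v]) by rewrite G'O.
by rewrite !inE eqxx eq_sym uv_pq.
Qed.

Lemma stable_path2_lt p q v : [set p; q] \in gedges OPT -> [set q; v] \in gedges OPT ->
  p != v -> gamma * d p q < d p v.
Proof.
move=> pqO qvO npv; have [[[treeO _] _] _] := stable; have [gO _ _ _] := treeO.
have [npq pO _] := graph_edge gO pqO; have [_ _ vO] := graph_edge gO qvO.
have vq : connect (eadj (gedges OPT :\ [set p; q])) v q.
  apply/connect1; rewrite /eadj in_setD1 setUC qvO andbT.
  by apply/eqP => /set2_inj[[eqp _]|[_ evp]]; [move: npq | move: npv]; rewrite ?eqp ?evp eqxx.
have pvNO := tree_triangle_free treeO pqO qvO npv.
exact: stable_swap_lt pqO npq npv pO vO pvNO (connect0 _ _) vq.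
Qed.

End Stability.

Lemma mulr_subr1_ge1 (R : realFieldType) (gamma : R) :
  1 < gamma -> 1 < gamma * (gamma - 1) ^+ 2 -> 1 <= gamma * (gamma - 1).
Proof. by rewrite expr2 => g1 gg; nra. Qed.

Unset Implicit Arguments.

Theorem mainTheorem4 (R : realFieldType) (V : finType) (d : V -> V -> R)
  (T : {set V}) (gamma : R) (OPT H : graph V) (a b c : V) :
  1 < gamma ->
  1 < gamma * (gamma - 1) ^+ 2 ->
  is_metric d ->
  stable_with gamma d T OPT ->
  is_subgraph H OPT ->
  (2 <= #|gverts H|)%N ->
  a != b -> [set a; b] \in gedges H ->
  c \in gverts OPT -> c \notin gverts H ->
  (d c a < (gamma - 1)^-1 * d a b <-> [set c; a] \in gedges OPT).
Proof.
move=> g1 gg metric_d stable [gH sHO eHO] _ nab abH cO cNH.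
have [d0 dz dC dtri] := metric_d; have [[[[_ _ connO _] _] _] _] := stable.
have [_ aH bH] := graph_edge gH abH.
have abO := subsetP eHO _ abH; have aO := subsetP sHO _ aH.
have [nca ncb] : c != a /\ c != b by split; apply: contraNneq cNH => ->.
have dab : 0 < d a b by rewrite lt_def d0 andbT; apply: contra_neq nab => /dz.
rewrite mulrC ltr_pdivlMr ?subr_gt0 //; split => [dca_lt | caO].
- apply/contraT => caNO.
  have [x [nxa xaO cx]] := connect_last_edge nca (connO c a cO aO).
  have dxa := stable_swap_lt stable g1 metric_d xaO nxa nca cO aO caNO cx (connect0 _ _).
  have [bx | nbx] := eqVneq b x.
    by rewrite -bx dC in dxa; have := mulr_subr1_ge1 g1 gg; nra.
  have baO : [set b; a] \in gedges OPT by rewrite setUC.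
  have axO : [set a; x] \in gedges OPT by rewrite setUC.
  have dbx := stable_path2_lt stable g1 metric_d baO axO nbx.
  have dxa_gt : (gamma - 1) * d a b < d x a.
    by have := dtri b a x; rewrite !(dC b) (dC a x) in dbx *; lra.
  have dca_gt : gamma * ((gamma - 1) * d a b) < d c a by nra.
  have : (gamma - 1) * (gamma * ((gamma - 1) * d a b)) < d a b by nra.
  by rewrite expr2 in gg; nra.
- have := stable_path2_lt stable g1 metric_d caO abO ncb.
  have := dtri c a b; nra.
Qed.
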